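(* Let $\mu>0$ and let $\eta:\mathbb{R}^n\to\mathbb{R}^n$ be the element-wise symmetric clipping operator, $\eta(\boldsymbol{u})_j=-\mu$ if $u_j\le-\mu$, $\eta(\boldsymbol{u})_j=u_j$ if $u_j\in(-\mu,\mu)$, $\eta(\boldsymbol{u})_j=\mu$ if $u_j\ge\mu$. For any two cones $\mathcal{X},\mathcal{X}'\subseteq\mathbb{R}^n$ with $\mathcal{X}\neq\mathcal{X}'$, we have $\eta(\mathcal{X})\neq\eta(\mathcal{X}')$, where $\eta(\mathcal{X})=\{\eta(\boldsymbol{x}):\boldsymbol{x}\in\mathcal{X}\}$.
   Context: A set $\mathcal{X}\subseteq\mathbb{R}^n$ is a cone (scale invariant) if $g\mathcal{X}=\mathcal{X}$ for all $g\in\mathbb{R}^*_+=(0,\infty)$, where $g\mathcal{X}=\{g\boldsymbol{x}:\boldsymbol{x}\in\mathcal{X}\}$. *)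

From mathcomp Require Import all_boot all_order all_algebra.
From mathcomp Require Import boolp classical_sets reals.
Set Implicit Arguments. Unset Strict Implicit. Unset Printing Implicit Defensive.
Import Order.TTheory GRing.Theory Num.Theory.
Local Open Scope ring_scope.
Local Open Scope classical_set_scope.

Definition scale_set (R : realType) (n : nat) (g : R) (X : set 'rV[R]_n) :
  set 'rV[R]_n := [set g *: x | x in X].

Definition is_cone (R : realType) (n : nat) (X : set 'rV[R]_n) : Prop :=
  forall g : R, 0 < g -> scale_set g X = X.

Definition clip_scalar (R : realType) (mu t : R) : R :=
  if t <= - mu then - mu else if t < mu then t else mu.

Definition clip (R : realType) (n : nat) (mu : R) (u : 'rV[R]_n) : 'rV[R]_n :=
  \row_j clip_scalar mu (u ord0 j).

From mathcomp Require Import all_boot all_order all_algebra.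
From mathcomp Require Import boolp classical_sets reals.
Set Implicit Arguments. Unset Strict Implicit. Unset Printing Implicit Defensive.
Import Order.TTheory GRing.Theory Num.Theory.
Local Open Scope ring_scope.
Local Open Scope classical_set_scope.

(* Clipping is the identity on the open box (-mu, mu)^n and injective over
   it, and every point of a cone can be scaled into that box.  So the points of
   the box in the clipped image of a cone are exactly the cone's points in the
   box, and rescaling them recovers the cone. *)

Section Clip.
Variables (R : realType) (n : nat) (mu : R).

Lemma clip_scalar_id (t : R) : `|t| < mu -> clip_scalar mu t = t.
Proof.
rewrite ltr_norml /clip_scalar => /andP[gt_t lt_t].
by rewrite leNgt gt_t lt_t.
Qed.

Lemma clip_scalar_eq_small (t s : R) :
  `|s| < mu -> clip_scalar mu t = s -> t = s.
Proof.
rewrite ltr_norml /clip_scalar => /andP[gt_s lt_s].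
case: ifP => [_ s_eq|_]; first by rewrite -s_eq ltxx in gt_s.
by case: ifP => [//|_ s_eq]; rewrite -s_eq ltxx in lt_s.
Qed.

Definition in_clip_box (u : 'rV[R]_n) := forall j, `|u ord0 j| < mu.

Lemma clip_id (u : 'rV[R]_n) : in_clip_box u -> clip mu u = u.
Proof. by move=> box_u; apply/rowP => j; rewrite mxE clip_scalar_id. Qed.

Lemma clip_eq_small (u v : 'rV[R]_n) :
  in_clip_box v -> clip mu u = v -> u = v.
Proof.
move=> box_v uv; apply/rowP => j; apply: clip_scalar_eq_small => //.
by rewrite -uv mxE.
Qed.

Lemma scale_into_clip_box (x : 'rV[R]_n) :
  0 < mu -> exists2 g : R, 0 < g & in_clip_box (g *: x).
Proof.
move=> mu_gt0; set S := \sum_j `|x ord0 j|.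
have S1_gt0 : 0 < 1 + S by rewrite ltr_wpDr ?sumr_ge0.
exists (mu / (1 + S)) => [|j]; first by rewrite divr_gt0.
rewrite mxE normrM gtr0_norm ?divr_gt0 // mulrAC ltr_pdivrMr // ltr_pM2l //.
by rewrite ltr_pwDl // /S (bigD1 j) //= lerDl sumr_ge0.
Qed.

Lemma cone_scale (X : set 'rV[R]_n) (g : R) :
  is_cone X -> 0 < g -> forall x, X (g *: x) <-> X x.
Proof.
move=> coneX g_gt0 x; split=> [Xgx|Xx]; last by rewrite -(coneX g) //; exists x.
have -> : x = g^-1 *: (g *: x) by rewrite scalerA mulVf ?scale1r ?gt_eqF.
by rewrite -(coneX g^-1) ?invr_gt0 //; exists (g *: x).
Qed.

Lemma clip_image_cone_subset (X X' : set 'rV[R]_n) :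
  0 < mu -> is_cone X -> is_cone X' ->
  clip mu @` X `<=` clip mu @` X' -> X `<=` X'.
Proof.
move=> mu_gt0 coneX coneX' sub x Xx.
have [g g_gt0 box_gx] := scale_into_clip_box x mu_gt0.
have /sub [x' X'x' clip_x'] : (clip mu @` X) (g *: x).
  by exists (g *: x); [apply/(cone_scale coneX g_gt0) | apply: clip_id].
by rewrite -(cone_scale coneX' g_gt0) -(clip_eq_small box_gx clip_x').
Qed.

End Clip.

Theorem proposition2 (R : realType) (n : nat) (mu : R) (hmu : 0 < mu)
  (X X' : set 'rV[R]_n) :
  is_cone X -> is_cone X' -> X <> X' ->
  clip mu @` X <> clip mu @` X'.
Proof.
move=> coneX coneX' neqXX' eq_clip; apply: neqXX'.
rewrite eqEsubset; split.
- by apply: (clip_image_cone_subset hmu coneX coneX'); rewrite eq_clip.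
- by apply: (clip_image_cone_subset hmu coneX' coneX); rewrite eq_clip.
Qed.
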